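(* Let $f$ be a DNF with $k$ terms over $\{0,1\}^n$ and let $y\in\{0,1\}^n$ satisfy $f_{>\tau}$ and not $f_{\le\tau}$ ($\tau=1000k$). Draw a uniformly random permutation $\pi$ of $[n]$ and run the sweep process from $y$, obtaining $z_0,z_1,\dots,z_n$. Then with probability at least $2^{-\tilde{O}(\sqrt{k})}$ there is some $i$ such that $\textsc{GenerateCandidateStem}(f,z_i)$ is a valid stem for some term of $f$ satisfied by $y$.
   Context: Terms are sets of literals, a DNF is a set of terms; $|T|$ is the number of literals; $g_{\le L}$ / $g_{>L}$ are the sub-DNFs of terms of length $\le L$ / $>L$. A term $T'$ is a valid stem of a term $T$ if $T'\subseteq T$ and $|T\setminus T'|\le 2k$. $x^{\oplus j}$ is $x$ with bit $j$ flipped. $\textsc{GenerateCandidateStem}(f,x)$: let $I=\{i: f(x^{\oplus i})=0\}$ and output the term $\{x_i:i\in I,x_i=1\}\cup\{\overline{x_i}:i\in I,x_i=0\}$. Sweep process: given $y$ with $f(y)=1$ and a permutation $\pi$ listing $[n]$ as $\pi(0),\dots,\pi(n-1)$, $z_0=y$, and $z_{t+1}=z_t^{\oplus\pi(t)}$ if $f(z_t^{\oplus\pi(t)})=1$, else $z_{t+1}=z_t$. (This is one iteration of the outer loop of the procedure FindCandidateStem.) *)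

From mathcomp Require Import all_boot all_fingroup.
From Stdlib Require Import Reals.
Set Implicit Arguments. Unset Strict Implicit. Unset Printing Implicit Defensive.

Definition point (n : nat) := {ffun 'I_n -> bool}.
(* A literal (i, b): b = true is x_i, b = false is ~x_i. *)
Definition literal (n : nat) := ('I_n * bool)%type.
Definition term (n : nat) := {set literal n}.
Definition dnf (n : nat) := {set term n}.

Definition term_sat n (T : term n) (x : point n) : bool :=
  [forall l in T, x l.1 == l.2].
Definition dnf_eval n (f : dnf n) (x : point n) : bool :=
  [exists T in f, term_sat T x].

Definition dnf_le n (g : dnf n) (L : nat) : dnf n := [set T in g | #|T| <= L].
Definition dnf_gt n (g : dnf n) (L : nat) : dnf n := [set T in g | L < #|T|].

Definition flip n (x : point n) (j : 'I_n) : point n :=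
  [ffun i => if i == j then ~~ x i else x i].

Definition valid_stem n (k : nat) (T' T : term n) : Prop :=
  T' \subset T /\ #|T :\: T'| <= 2 * k.

Definition gen_candidate_stem n (f : dnf n) (x : point n) : term n :=
  [set (i, x i) | i in [set i : 'I_n | ~~ dnf_eval f (flip x i)]].

Definition sweep_step n (f : dnf n) (z : point n) (j : 'I_n) : point n :=
  if dnf_eval f (flip z j) then flip z j else z.

Definition sweep n (f : dnf n) (y : point n) (pi : {perm 'I_n}) (t : nat) : point n :=
  foldl (sweep_step f) y (take t [seq pi i | i <- enum 'I_n]).

Definition good_perm n (f : dnf n) (y : point n) (pi : {perm 'I_n}) : bool :=
  [exists i : 'I_n.+1, exists T in f,
     term_sat T y && ((gen_candidate_stem f (sweep f y pi i) \subset T) &&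
                      (#|T :\: gen_candidate_stem f (sweep f y pi i)| <= 2 * #|f|))].

Definition prob_good n (f : dnf n) (y : point n) : R :=
  (INR #|[set pi : {perm 'I_n} | good_perm f y pi]| / INR #|{perm 'I_n}|)%R.

(* Count orderings instead of probabilities.  Along the sweep, follow the m >= 1
   terms of f satisfied by both y and the current point z.  Visiting a coordinate
   x whose flip satisfies no term falsified by y (a non-foreign coordinate) keeps
   us among these terms: the sweep flips x exactly when some surviving term lacks
   the literal (x, z x), and then kills the d_x surviving terms containing it.
   If z is not good, each surviving term has more than 2k literals outside the
   candidate stem, and at most k - m of them sit on foreign coordinates, so
   double counting gives sum_x d_x >= m (k + m + 1).  With a = isqrt k + 1 this
   gain outweighs the foreign coordinates, and Bernoulli's inequality
   (m + a d) (m - d)^a <= m^(a+1) yields by induction that at least N! / m^a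
   orderings of the N unvisited coordinates reach a good point.  Hence the
   probability is at least k^-(isqrt k + 1) >= 2^(-2 sqrt k (ln k + 1)^2). *)

From mathcomp Require Import all_boot all_fingroup.
From mathcomp Require Import zify.
From Stdlib Require PeanoNat.

Set Implicit Arguments. Unset Strict Implicit. Unset Printing Implicit Defensive.

Section Literals.
Variable n : nat.
Implicit Types (z w : point n) (T : term n) (f : dnf n).

Lemma term_satP T z : reflect (forall l, l \in T -> z l.1 = l.2) (term_sat T z).
Proof.
apply: (iffP forallP) => [H l lT | H l]; first by move/implyP/(_ lT)/eqP: (H l).
by apply/implyP => /H ->.
Qed.

Lemma flipE z j i : flip z j i = if i == j then ~~ z i else z i.
Proof. by rewrite ffunE. Qed.

Lemma sat_lit T z j b : term_sat T z -> (j, b) \in T -> b = z j.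
Proof. by move=> /term_satP Tz /Tz. Qed.

Lemma term_sat_flip T z j :
  (forall b, (j, b) \notin T) -> term_sat T (flip z j) = term_sat T z.
Proof.
move=> Tj; apply/term_satP/term_satP => H [i b] lT; rewrite -(H _ lT) flipE /=;
  by case: eqP => // Eij; move: (Tj b); rewrite -Eij lT.
Qed.

Lemma sat_flip_lit T z j : (j, z j) \in T -> ~~ term_sat T (flip z j).
Proof. by move=> jT; apply/negP => /sat_lit/(_ jT); rewrite flipE eqxx; case: (z j). Qed.

Lemma no_lit_of_sat T z j : term_sat T z -> (j, z j) \notin T -> forall b, (j, b) \notin T.
Proof. by move=> Tz jT b; apply/negP => jbT; move: jT; rewrite -(sat_lit Tz jbT) jbT. Qed.

Lemma no_lit_of_sat_flip T z w j :
  term_sat T w -> term_sat T (flip z j) -> w j = z j -> forall b, (j, b) \notin T.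
Proof.
move=> Tw Tzj wzj b; apply/negP => jT.
by move: (sat_lit Tw jT) (sat_lit Tzj jT); rewrite flipE eqxx wzj => ->; case: (z j).
Qed.

Lemma flip_sat_uniq T z i j :
  ~~ term_sat T z -> term_sat T (flip z i) -> term_sat T (flip z j) -> i = j.
Proof.
case/forallPn => -[l b]; rewrite negb_imply => /andP[lT /= zl].
have flip_at k : term_sat T (flip z k) -> l = k.
  by move=> /sat_lit/(_ lT); rewrite flipE; case: eqP => // _ E; rewrite E eqxx in zl.
by move=> /flip_at <- /flip_at.
Qed.

Lemma mem_candidate_stem f z i :
  ((i, z i) \in gen_candidate_stem f z) = ~~ dnf_eval f (flip z i).
Proof. by rewrite mem_imset ?inE // => a b []. Qed.

Lemma candidate_stem_sub f z T : T \in f -> term_sat T z -> gen_candidate_stem f z \subset T.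
Proof.
move=> Tf Tz; apply/subsetP => l /imsetP[i]; rewrite inE => nfi ->.
apply: contraNT nfi => iT; apply/existsP; exists T.
by rewrite Tf term_sat_flip ?Tz //; exact: no_lit_of_sat Tz iT.
Qed.

End Literals.

Lemma bernoulli_nat p d a : (p + a.+1 * d) * p ^ a <= (p + d) ^ a.+1.
Proof.
elim: a => [|a IH]; first by rewrite expn0 !muln1 mul1n.
have le_pow : p ^ a.+1 <= (p + d) ^ a.+1 by rewrite leq_exp2r // leq_addr.
rewrite [p ^ _]expnS [(p + d) ^ a.+2]expnS; nia.
Qed.

Lemma foreign_loss_le_gain a k m r X Y : k <= a * a ->
  m * (k + m + 1) <= Y + X -> Y + r <= r * m -> r + m <= k -> m * r <= a * X.
Proof.
move=> Ha total Y_le r_le.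
have mr_le : m * r + m * m <= m * k by rewrite -mulnDr leq_mul2l r_le orbT.
have r_le_X : r <= X by nia.
have mm_le_X : m * m <= X by nia.
case: (leqP m a) => [ma | am].
  by apply: leq_trans (leq_mul ma (leqnn r)) _; rewrite leq_mul2l r_le_X orbT.
have : m * k <= m * (a * a) by rewrite leq_mul2l Ha orbT.
have : a * (m * a) <= a * (m * m) by rewrite !leq_mul2l ltnW ?orbT.
have : a * (m * m) <= a * X by rewrite leq_mul2l mm_le_X orbT.
have : m * r <= m * k by rewrite leq_mul2l orbC (leq_trans (leq_addr m r)).
lia.
Qed.

Lemma count_permutations (T : eqType) (P : pred (seq T)) s : 0 < size s -> uniq s ->
  count P (permutations s) =
  \sum_(x <- s) count (fun t => P (x :: t)) (permutations (rem x s)).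
Proof.
move=> s0 Us; rewrite (seq.permP (permutationsE s0)) undup_id // count_flatten sumnE !big_map.
by apply: eq_bigr => x _; rewrite count_map.
Qed.

Lemma count_permutations_enum_le n (P : pred (seq 'I_n)) :
  count P (permutations (enum 'I_n)) <=
  #|[set pi : {perm 'I_n} | P [seq pi i | i <- enum 'I_n]]|.
Proof.
rewrite cardE -(size_map (fun pi : {perm 'I_n} => [seq pi i | i <- enum 'I_n])) -size_filter.
apply: uniq_leq_size; first by rewrite filter_uniq // permutations_uniq.
move=> t; rewrite mem_filter mem_permutations => /andP[Pt perm_t].
have size_t : size t == n by rewrite (perm_size perm_t) size_enum_ord.
have uniq_t : uniq (Tuple size_t) by rewrite /= (perm_uniq perm_t) enum_uniq.
pose pi := perm (elimT (tuple_uniqP (Tuple size_t)) uniq_t).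
have pi_t : [seq pi i | i <- enum 'I_n] = t by rewrite (eq_map (permE _)) map_tnth_enum.
by apply/mapP; exists pi; rewrite ?mem_enum ?inE pi_t.
Qed.

Section Sweep.
Variables (n : nat) (f : dnf n) (y : point n).
Implicit Types (z : point n) (T : term n) (s : seq 'I_n).

Definition sat_terms z : {set term n} := [set T in f | term_sat T z].

(* [good_perm f y pi] unfolds to [exists i, good_point (sweep f y pi i)]. *)
Definition good_point z : bool :=
  [exists T in f, term_sat T y &&
     ((gen_candidate_stem f z \subset T) && (#|T :\: gen_candidate_stem f z| <= 2 * #|f|))].

Definition foreign_flips z : {set 'I_n} :=
  [set i | [exists T in f, ~~ term_sat T y && term_sat T (flip z i)]].

Definition unshared z x : bool := [exists T in sat_terms z, (x, z x) \notin T].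

Definition killed z x : {set term n} :=
  [set T in sat_terms z | unshared z x && ((x, z x) \in T)].

Definition pending z s T : {set 'I_n} :=
  [set x | (x \in s) && (unshared z x && ((x, z x) \in T))].

(* [s] lists the coordinates the sweep has not visited yet. *)
Definition sweep_inv z s : Prop :=
  [/\ sat_terms z \subset sat_terms y, sat_terms z != set0,
      forall i T T', i \notin s -> T \in sat_terms z -> T' \in sat_terms z ->
        (i, z i) \in T -> (i, z i) \in T' &
      {in s, forall i, z i = y i}].

Lemma card_foreign_flips z :
  sat_terms z \subset sat_terms y -> #|foreign_flips z| + #|sat_terms z| <= #|f|.
Proof.
move=> zy; set F := f :\: sat_terms y.
pose g i : term n := odflt set0 [pick T in F | term_sat T (flip z i)].
have gP i : i \in foreign_flips z -> g i \in F /\ term_sat (g i) (flip z i).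
  rewrite inE => /existsP[T /and3P[Tf nTy Tzi]]; rewrite /g.
  case: pickP => [T' /andP[] // | /(_ T)]; by rewrite !inE Tf nTy Tzi.
have g_inj : {in foreign_flips z &, injective g}.
  move=> i j /gP[gF gi] /gP[_ gj] gij; rewrite -gij in gj.
  apply: flip_sat_uniq gi gj; apply/negP => gz.
  by case/setDP: gF => gf; rewrite (subsetP zy) // inE gf gz.
rewrite -(card_in_imset g_inj) -(cardsID (sat_terms y) f) addnC leq_add //.
  by apply: subset_leq_card; rewrite subsetI zy andbT; apply/subsetP => T; rewrite inE => /andP[].
by apply: subset_leq_card; apply/subsetP => T /imsetP[i iR ->]; case: (gP i iR).
Qed.

Lemma sweep_step_neq z x i : i != x -> sweep_step f z x i = z i.
Proof. by move=> ix; rewrite /sweep_step; case: ifP; rewrite // flipE (negbTE ix). Qed.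

Lemma killed_shared z x : ~~ unshared z x -> killed z x = set0.
Proof. by move=> /negbTE sh; apply/setP => T; rewrite !inE sh andbF. Qed.

Lemma killed_lt z x : sat_terms z != set0 -> #|killed z x| < #|sat_terms z|.
Proof.
move=> ne; case unsh: (unshared z x); last by rewrite killed_shared ?unsh // cards0 card_gt0.
case/existsP: unsh => T' /andP[T'z xT']; apply: proper_card; apply/properP; split.
  by apply/subsetP => T; rewrite inE => /andP[].
by exists T' => //; rewrite !inE (negbTE xT') !andbF.
Qed.

Section Step.
Variables (z : point n) (s : seq 'I_n) (x : 'I_n).
Hypotheses (inv : sweep_inv z s) (xs : x \in s) (xR : x \notin foreign_flips z).

Lemma sat_terms_of_sat_flip T :
  T \in f -> term_sat T (flip z x) -> T \in sat_terms z /\ forall b, (x, b) \notin T.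
Proof.
case: inv => _ _ _ zy Tf Tzx.
have Ty : term_sat T y.
  by apply: contraR xR => nTy; rewrite inE; apply/existsP; exists T; rewrite Tf nTy Tzx.
have noT := no_lit_of_sat_flip Ty Tzx (esym (zy x xs)).
by rewrite inE Tf -(term_sat_flip z noT) Tzx.
Qed.

Lemma dnf_eval_flip : dnf_eval f (flip z x) = unshared z x.
Proof.
apply/existsP/existsP => [[T /andP[Tf Tzx]] | [T /andP[Tsz xT]]].
  by have [Tsz noT] := sat_terms_of_sat_flip Tf Tzx; exists T; rewrite Tsz noT.
move: Tsz; rewrite inE => /andP[Tf Tz]; exists T.
by rewrite Tf term_sat_flip ?Tz //; exact: no_lit_of_sat Tz xT.
Qed.

Lemma sweep_stepE : sweep_step f z x = if unshared z x then flip z x else z.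
Proof. by rewrite /sweep_step dnf_eval_flip. Qed.

Lemma sat_terms_sweep_step : sat_terms (sweep_step f z x) = sat_terms z :\: killed z x.
Proof.
rewrite sweep_stepE; case: ifP => unsh; last by rewrite killed_shared ?unsh ?setD0.
apply/setP => T; rewrite !inE unsh /=; case Tf: (T \in f) => //=.
case Tz: (term_sat T z) => /=; last first.
  by apply/negP => /(sat_terms_of_sat_flip Tf)[]; rewrite inE Tf Tz.
case xT: ((x, z x) \in T); first exact/negbTE/sat_flip_lit.
by rewrite term_sat_flip //; apply: no_lit_of_sat Tz _; rewrite xT.
Qed.

Lemma card_sat_terms_step : #|sat_terms (sweep_step f z x)| + #|killed z x| = #|sat_terms z|.
Proof.
rewrite sat_terms_sweep_step addnC -(cardsID (killed z x) (sat_terms z)) (setIidPr _) //.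
by apply/subsetP => T; rewrite inE => /andP[].
Qed.

Lemma sweep_inv_step : uniq s -> sweep_inv (sweep_step f z x) (rem x s).
Proof.
move=> us; case: (inv) => zy ne agree ys.
have remE i : (i \in rem x s) = (i != x) && (i \in s) by rewrite (mem_rem_uniq x us) inE.
have sub : sat_terms (sweep_step f z x) \subset sat_terms z.
  by rewrite sat_terms_sweep_step subsetDl.
split.
- exact: subset_trans sub zy.
- by rewrite -card_gt0; have := card_sat_terms_step; have := killed_lt x ne; lia.
- move=> i T T'; rewrite remE negb_and negbK => /orP[/eqP-> | i_s] Tsz T'sz; last first.
    rewrite sweep_step_neq; last by apply: contraNneq i_s => ->.
    by apply: agree; rewrite ?(subsetP sub).
  have /[dup] /(subsetP sub) : T \in sat_terms (sweep_step f z x) := Tsz.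
  rewrite !inE sweep_stepE; case: ifP => unsh /andP[_ Tz] /andP[_ Tz'] xT.
    by move: (sat_lit Tz xT); rewrite flipE eqxx; case: (z x).
  by move/negbT/existsPn: unsh => /(_ T'); rewrite (subsetP sub) // negbK.
- by move=> i; rewrite remE => /andP[ix i_s]; rewrite sweep_step_neq // ys.
Qed.

End Step.

Lemma stem_gap_sub z s T : sweep_inv z s -> T \in sat_terms z ->
  [set l.1 | l in T :\: gen_candidate_stem f z] \subset pending z s T :|: foreign_flips z.
Proof.
case=> zy _ agree _ Tsz; move: (Tsz) (subsetP zy T Tsz); rewrite !inE => /andP[_ Tz] /andP[_ Ty].
apply/subsetP => _ /imsetP[[j b] /setDP[jT jstem] ->] /=.
have eb := sat_lit Tz jT; subst b.
rewrite mem_candidate_stem negbK in jstem; case/existsP: jstem => T' /andP[T'f T'zj].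
rewrite in_setU; case T'y: (term_sat T' y); last first.
  by apply/orP; right; rewrite inE; apply/existsP; exists T'; rewrite T'f T'y T'zj.
have noT' := no_lit_of_sat_flip T'y T'zj (esym (sat_lit Ty jT)).
have T'sz : T' \in sat_terms z by rewrite inE T'f -(term_sat_flip z noT').
apply/orP; left; rewrite inE jT andbT; apply/andP; split.
  by apply: contraT => js; move: (agree j T T' js Tsz T'sz jT); rewrite (negbTE (noT' _)).
by apply/existsP; exists T'; rewrite T'sz noT'.
Qed.

Lemma pending_large z s T : sweep_inv z s -> ~~ good_point z -> T \in sat_terms z ->
  #|f| + #|sat_terms z| < #|pending z s T|.
Proof.
move=> inv ngood Tsz; have [zy _ _ _] := inv.
move: (Tsz) (subsetP zy T Tsz); rewrite !inE => /andP[Tf Tz] /andP[_ Ty].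
have gap : 2 * #|f| < #|T :\: gen_candidate_stem f z|.
  by move/existsPn: ngood => /(_ T); rewrite Tf Ty candidate_stem_sub //= -ltnNge.
have fst_inj : {in T :\: gen_candidate_stem f z &, injective (@fst 'I_n bool)}.
  move=> [i b] [j c] /setDP[iT _] /setDP[jT _] /= ij; subst j.
  by rewrite (sat_lit Tz iT) (sat_lit Tz jT).
have cover : #|T :\: gen_candidate_stem f z| <= #|pending z s T| + #|foreign_flips z|.
  rewrite -(card_in_imset fst_inj).
  exact: leq_trans (subset_leq_card (stem_gap_sub inv Tsz)) (leq_card_setU _ _).
have := card_foreign_flips zy; lia.
Qed.

Lemma sum_card_killed z s : uniq s ->
  \sum_(x <- s) #|killed z x| = \sum_(T in sat_terms z) #|pending z s T|.
Proof.
move=> us; under eq_bigr do rewrite -sum1dep_card big_mkcondr.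
rewrite exchange_big; apply: eq_bigr => T _.
rewrite -big_mkcond sum1_count -size_filter -(card_uniqP _) ?filter_uniq //; apply: eq_card => x.
by rewrite !inE mem_filter andbC.
Qed.

Lemma sum_card_killed_large z s : sweep_inv z s -> uniq s -> ~~ good_point z ->
  #|sat_terms z| * (#|f| + #|sat_terms z| + 1) <= \sum_(x <- s) #|killed z x|.
Proof.
move=> inv us ngood; rewrite sum_card_killed // -sum_nat_const; apply: leq_sum => T Tsz.
by rewrite addn1; exact: pending_large.
Qed.

Fixpoint sweep_hits z s : bool :=
  good_point z || (if s is x :: s' then sweep_hits (sweep_step f z x) s' else false).

Lemma sweep_hits_good_prefix z s : sweep_hits z s ->
  exists2 t, t <= size s & good_point (foldl (sweep_step f) z (take t s)).
Proof.
elim: s z => [|x s IH] z /=; first by rewrite orbF; exists 0.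
case/orP => [good | /IH[t le_t good]]; first by exists 0; rewrite ?take0.
by exists t.+1.
Qed.

Lemma count_sweep_hits_good z s : uniq s -> good_point z ->
  count (sweep_hits z) (permutations s) = (size s)`!.
Proof.
move=> us good; rewrite -size_permutations // -count_predT.
by apply: eq_count => -[|x t] /=; rewrite good.
Qed.

Lemma sum_gain_large a z s : #|f| <= a * a -> sweep_inv z s -> uniq s -> ~~ good_point z ->
  #|sat_terms z| * size s <=
  \sum_(x <- s | x \notin foreign_flips z) (#|sat_terms z| + a * #|killed z x|).
Proof.
move=> Ha inv us ngood; have [zy ne _ _] := inv.
have := sum_card_killed_large inv us ngood; rewrite (bigID (mem (foreign_flips z))) /=.
rewrite big_split /= -big_distrr /= big_const_seq iter_addn_0.
set R := foreign_flips z; set m := #|sat_terms z|; set r := count (mem R) s.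
set X := \sum_(i <- s | i \notin R) _; set Y := \sum_(i <- s | i \in R) _ => total.
have Y_le : Y + r <= r * m.
  have -> : r * m = \sum_(i <- s | i \in R) m by rewrite big_const_seq iter_addn_0 mulnC.
  rewrite /r -sum1_count -big_split /=; apply: leq_sum => i _.
  by rewrite addn1 (killed_lt _ ne).
have r_le : r + m <= #|f|.
  apply: leq_trans (card_foreign_flips zy); rewrite leq_add2r.
  rewrite /r -size_filter -(card_uniqP _) ?filter_uniq //; apply: subset_leq_card.
  by apply/subsetP => x; rewrite mem_filter => /andP[].
rewrite -(count_predC (mem R)) mulnDr addnC leq_add2l.
exact: foreign_loss_le_gain Ha total Y_le r_le.
Qed.

Lemma fact_le_count_sweep_hits a s z : #|f| <= a * a -> uniq s -> sweep_inv z s ->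
  (size s)`! <= count (sweep_hits z) (permutations s) * #|sat_terms z| ^ a.
Proof.
move=> Ha; move Ns: (size s) => N; elim: N s Ns z => [|N IH] s Ns z us inv;
  have m_gt0 : 0 < #|sat_terms z| by rewrite card_gt0; case: inv.
all: case good: (good_point z);
  first by rewrite count_sweep_hits_good // Ns leq_pmulr // expn_gt0 m_gt0.
  have := sum_card_killed_large inv us (negbT good).
  by rewrite (size0nil Ns) big_nil leqn0 muln_eq0 addn1 orbF eqn0Ngt m_gt0.
set m := #|sat_terms z|.
have step x : x \in s -> x \notin foreign_flips z ->
    N`! * (m + a * #|killed z x|) <=
    count (sweep_hits (sweep_step f z x)) (permutations (rem x s)) * m ^ a.+1.
  (* the induction hypothesis at the m - d surviving terms, times Bernoulli *)
  move=> xs xR; have card_step := card_sat_terms_step inv xs xR; rewrite -/m in card_step.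
  have := IH (rem x s) _ _ (rem_uniq x us) (sweep_inv_step inv xs xR us).
  rewrite size_rem // Ns => /(_ erefl) /leq_mul/(_ (leqnn (m + a * #|killed z x|))) le_IH.
  apply: leq_trans le_IH _; rewrite -mulnA leq_mul2l -card_step -addnA -mulSn mulnC.
  by rewrite bernoulli_nat orbT.
have sum_step : N`! * \sum_(x <- s | x \notin foreign_flips z) (m + a * #|killed z x|) <=
                count (sweep_hits z) (permutations s) * m ^ a.+1.
  rewrite count_permutations ?Ns // big_distrr big_distrl /= big_mkcond /=.
  rewrite [leqLHS]big_seq [leqRHS]big_seq; apply: leq_sum => x xs.
  case: ifPn => // xR; apply: leq_trans (step x xs xR) _.
  by rewrite leq_mul2r eq_leq ?orbT //; apply: eq_count => t /=; rewrite good.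
have := leq_mul (leqnn N`!) (sum_gain_large Ha inv us (negbT good)).
rewrite Ns -/m => le_gain; rewrite factS -(leq_pmul2l m_gt0) [leqRHS]mulnCA -expnS.
by apply: leq_trans (leq_trans le_gain sum_step); rewrite -/m; lia.
Qed.

End Sweep.

Lemma fact_le_card_good_perm n (f : dnf n) (y : point n) : dnf_eval f y ->
  n`! <= #|[set pi | good_perm f y pi]| * #|f| ^ (Nat.sqrt #|f|).+1.
Proof.
case/existsP => T0 /andP[T0f T0y]; set a := (Nat.sqrt #|f|).+1.
have Ha : #|f| <= a * a by apply/ltnW/ltP; exact: (PeanoNat.Nat.sqrt_specif #|f|).2.
have inv : sweep_inv f y y (enum 'I_n).
  split=> //; first by apply/set0Pn; exists T0; rewrite inE T0f T0y.
  by move=> i T T'; rewrite mem_enum.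
have := fact_le_count_sweep_hits Ha (enum_uniq _) inv; rewrite size_enum_ord.
move/leq_trans; apply; apply: leq_mul.
  apply: leq_trans (count_permutations_enum_le _) _; apply: subset_leq_card.
  apply/subsetP => pi; rewrite !inE => /sweep_hits_good_prefix[t].
  rewrite size_map size_enum_ord => le_t.
  by move=> good; apply/existsP; exists (Ordinal (le_t : t < n.+1)).
by rewrite leq_exp2r //; apply: subset_leq_card; apply/subsetP => T; rewrite inE => /andP[-> _].
Qed.

(* Imported this late because Reals rebinds [^] on nat to [Nat.pow]. *)
From Stdlib Require Import Reals Lra.

Lemma INR_expn m a : INR (expn m a) = (INR m ^ a)%R.
Proof. by elim: a => //= a IH; rewrite expnS mult_INR IH. Qed.

Lemma inv_pow_le_prob_good n (f : dnf n) (y : point n) : dnf_eval f y ->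
  (/ INR #|f| ^ (Nat.sqrt #|f|).+1 <= prob_good f y)%R.
Proof.
move=> fy; have /leP/le_INR := fact_le_card_good_perm fy.
rewrite mult_INR INR_expn /prob_good card_Sn; set a := (Nat.sqrt _).+1.
set G := INR #|[set pi | good_perm f y pi]|.
have k_pos : (0 < INR #|f|)%R.
  apply/lt_0_INR/ltP; case/existsP: fy => T /andP[Tf _]; rewrite card_gt0; apply/set0Pn.
  by exists T.
have ka_pos : (0 < INR #|f| ^ a)%R by apply: pow_lt.
have fact_pos : (0 < INR n`!)%R by apply/lt_0_INR/ltP/fact_gt0.
move=> le_fact; apply: (Rmult_le_reg_r (INR n`! * INR #|f| ^ a)); first exact: Rmult_lt_0_compat.
have -> : (/ INR #|f| ^ a * (INR n`! * INR #|f| ^ a) = INR n`!)%R by field; lra.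
by have -> : (G / INR n`! * (INR n`! * INR #|f| ^ a) = G * INR #|f| ^ a)%R by field; lra.
Qed.

Lemma Rpower_le_inv_pow_isqrt k : (0 < k)%N ->
  (Rpower 2 (- (2 * sqrt (INR k) * Rpower (ln (INR k) + 1) 2)) <= / INR k ^ (Nat.sqrt k).+1)%R.
Proof.
move=> k_gt0; have k1 : (1 <= INR k)%R by apply: (le_INR 1); apply/leP.
set L := ln (INR k); set s := Nat.sqrt k.
have L_ge0 : (0 <= L)%R.
  rewrite /L -ln_1; case: (Rle_lt_or_eq_dec _ _ k1) => [lt | <-]; last exact: Rle_refl.
  by apply/Rlt_le/ln_increasing => //; lra.
have s_le : (INR s <= sqrt (INR k))%R.
  rewrite -(sqrt_square (INR s) (pos_INR s)); apply: sqrt_le_1_alt.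
  by rewrite -mult_INR; apply: le_INR; exact: (PeanoNat.Nat.sqrt_specif k).1.
have sqrt_ge1 : (1 <= sqrt (INR k))%R by rewrite -sqrt_1; apply: sqrt_le_1_alt.
have two : (2 = INR 2)%R by rewrite /=; lra.
have -> : Rpower (L + 1) 2 = ((L + 1) ^ 2)%R by rewrite two Rpower_pow; lra.
rewrite -(Rpower_pow _ (INR k)); last lra.
rewrite -Rpower_Ropp /Rpower.
have arg : (- (2 * sqrt (INR k) * (L + 1) ^ 2) * ln 2 <= - INR s.+1 * L)%R.
  have le_L : (L <= (L + 1) ^ 2 * ln 2)%R by have := ln_lt_2; nra.
  have : (INR s.+1 * L <= 2 * sqrt (INR k) * L)%R.
    by apply: Rmult_le_compat_r => //; rewrite S_INR; lra.
  have : (2 * sqrt (INR k) * L <= 2 * sqrt (INR k) * ((L + 1) ^ 2 * ln 2))%R.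
    by apply: Rmult_le_compat_l => //; lra.
  lra.
case: (Rle_lt_or_eq_dec _ _ arg) => [lt | ->]; [exact/Rlt_le/exp_increasing | exact: Rle_refl].
Qed.

Theorem lemma4p12 :
  exists C : R, (0 < C)%R /\
  forall (n : nat) (f : dnf n) (y : point n),
    let k := #|f| in
    let tau := 1000 * k in
    dnf_eval (dnf_gt f tau) y -> ~~ dnf_eval (dnf_le f tau) y ->
    (Rpower 2 (- (C * sqrt (INR k) * Rpower (ln (INR k) + 1) C)) <= prob_good f y)%R.
Proof.
exists 2%R; split; first lra.
move=> n f y k tau /existsP[T /andP[]]; rewrite inE => /andP[Tf _] Ty _.
have fy : dnf_eval f y by apply/existsP; exists T; rewrite Tf Ty.
apply: Rle_trans (inv_pow_le_prob_good fy); apply: Rpower_le_inv_pow_isqrt.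
by rewrite card_gt0; apply/set0Pn; exists T.
Qed.
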